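(* Let $n,s\in\mathbb{N}$, $\varepsilon\in(0,1)$, and suppose $m:=\frac{\varepsilon n}{2s}$ is an integer with $m\ge 3$; put $L:=n/m=\frac{2s}{\varepsilon}$ (an integer). Define $b_0=1$ and $b_k=km-1$ for $k=1,\dots,L$, and $$B=\{1,2\}\cup\{b_k,\,b_k+1 : k=1,\dots,L\}\subseteq[n].$$ Define intervals $I_0=\{2,3,\dots,b_1\}$ and $I_k=\{b_k+1,\dots,b_{k+1}\}$ for $1\le k\le L-1$ (these partition $\{2,\dots,n-1\}$). For $x\in I_k$ ($0\le k\le L-1$) let $P(x)=\{b_k,\,b_k+1,\,x,\,b_{k+1},\,b_{k+1}+1\}$. Let $f:[n]\to\mathbb{R}$ have at most $s$ distinct discrete derivatives, and assume (i) $f$ is $\varepsilon$-far from convex, and (ii) there is a convex $h:B\to\mathbb{R}$ with $|\{y\in B: h(y)\ne f(y)\}|\le \frac{\varepsilon}{32}|B|$. Then $$\bigl|\{x\in\{2,\dots,n-1\} : f|_{P(x)} \text{ is not convex}\}\bigr|\ \ge\ \frac{\varepsilon n}{32}.$$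
   Context: For $f:[n]\to\mathbb{R}$, the discrete derivative at $i\in[n-1]$ is $\Delta_f(i)=f(i+1)-f(i)$; the number of distinct discrete derivatives of $f$ is $|\{\Delta_f(i): i\in[n-1]\}|$. For a finite set $S\subseteq\mathbb{R}$, a function $g:S\to\mathbb{R}$ is convex if $\frac{g(y)-g(x)}{y-x}\le\frac{g(z)-g(y)}{z-y}$ for all $x<y<z$ in $S$. $f$ is $\varepsilon$-far from convex if every convex $g:[n]\to\mathbb{R}$ differs from $f$ on at least $\varepsilon n$ points of $[n]$. *)

From HB Require Import structures.
From mathcomp Require Import all_boot all_order all_algebra.
From mathcomp Require Import reals.
Set Implicit Arguments. Unset Strict Implicit. Unset Printing Implicit Defensive.
Import Order.TTheory GRing.Theory Num.Theory.
Local Open Scope ring_scope.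

(* Functions [n] -> R are modelled as g : nat -> R; only values on the
   relevant finite domain matter.  A finite domain S ⊆ N (⊆ R) is a seq nat. *)

Definition convex_on {R : realFieldType} (S : seq nat) (g : nat -> R) : bool :=
  all (fun x => all (fun y => all (fun z =>
     ((x < y)%N && (y < z)%N) ==>
     ((g y - g x) / (y%:R - x%:R) <= (g z - g y) / (z%:R - y%:R))) S) S) S.

Definition dom (n : nat) : seq nat := iota 1 n.

Definition num_derivs {R : realFieldType} (n : nat) (f : nat -> R) : nat :=
  size (undup [seq f i.+1 - f i | i <- iota 1 n.-1]).

Definition eps_far {R : realFieldType} (eps : R) (n : nat) (f : nat -> R) : Prop :=
  forall g : nat -> R, convex_on (dom n) g ->
    eps * n%:R <= (count (fun x => g x != f x) (dom n))%:R.

Definition bpt (m k : nat) : nat := if k == 0%N then 1%N else (k * m).-1.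

Definition Bset (m L : nat) : seq nat :=
  undup ([:: 1%N; 2%N] ++ flatten [seq [:: bpt m k; (bpt m k).+1] | k <- iota 1 L]).

Definition Pset (m k x : nat) : seq nat :=
  [:: bpt m k; (bpt m k).+1; x; bpt m k.+1; (bpt m k.+1).+1].

Definition bad_point {R : realFieldType} (m L : nat) (f : nat -> R) (x : nat) : bool :=
  has (fun k => ((bpt m k < x)%N && (x <= bpt m k.+1)%N) && ~~ convex_on (Pset m k x) f)
      (iota 0 L).

From HB Require Import structures.
From mathcomp Require Import all_boot all_order all_algebra.
From mathcomp Require Import reals.
From mathcomp Require Import ring lra zify.
Import Order.TTheory GRing.Theory Num.Theory.
Local Open Scope ring_scope.
Set Implicit Arguments. Unset Strict Implicit.

(* Extend the convex h on B to [n] by the upper envelope g of its tangent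
   lines at the breakpoints, the line through b_j and b_j + 1 for each j; g is
   convex, so it differs from f on at least eps n points.  Call the block I_k
   good if f = h at b_k, b_k + 1, b_{k+1}, b_{k+1} + 1 and h has the same
   slope at b_k and b_{k+1}.  On a good block g is that common tangent line,
   and convexity of f on P(x) forces f x onto it, so g x <> f x only at bad
   points x.  Each other block has at most m points; at most 4t blocks fail
   because of the t points where h <> f on B, and at most s because of a jump
   of slope, since the slopes of h increase and each slope realised by f is one
   of its s discrete derivatives.  So eps n <= 2 + #bad + (4t + s) m, and
   32 t <= eps |B| <= 2 eps + 4 s finishes the count. *)

Section ConvexOnSeq.
Variable R : realFieldType.
Implicit Types (S : seq nat) (g : nat -> R).

Lemma convex_on_cross S g x y z : convex_on S g ->
  x \in S -> y \in S -> z \in S -> (x < y)%N -> (y < z)%N ->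
  (g y - g x) * (z%:R - y%:R) <= (g z - g y) * (y%:R - x%:R).
Proof.
move=> /allP/(_ x) gS xS yS zS xy yz.
move: (gS xS) => /allP/(_ y yS)/allP/(_ z zS); rewrite xy yz /=.
by rewrite ler_pdivlMr ?subr_gt0 ?ltr_nat // mulrAC ler_pdivrMr ?subr_gt0 ?ltr_nat.
Qed.

Lemma convex_on_of_cross S g :
  (forall x y z, (x < y)%N -> (y < z)%N ->
    (g y - g x) * (z%:R - y%:R) <= (g z - g y) * (y%:R - x%:R)) ->
  convex_on S g.
Proof.
move=> H; apply/allP => x _; apply/allP => y _; apply/allP => z _.
apply/implyP => /andP[xy yz].
by rewrite ler_pdivlMr ?subr_gt0 ?ltr_nat // mulrAC ler_pdivrMr ?subr_gt0 ?ltr_nat // H.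
Qed.

Definition affine g := forall x y z : nat,
  g y * (z%:R - x%:R) = g x * (z%:R - y%:R) + g z * (y%:R - x%:R).

Lemma convex_on_bigmax (I : eqType) (r : seq I) (F : I -> nat -> R) F0 S :
  affine F0 -> (forall i, affine (F i)) ->
  convex_on S (fun x => \big[Num.max/F0 x]_(i <- r) F i x).
Proof.
move=> aF0 aF; set M := fun x => _; apply: convex_on_of_cross => x y z xy yz.
have xz : 0 < (z%:R - x%:R : R) by rewrite subr_gt0 ltr_nat; lia.
have le_chord G : affine G -> G x <= M x -> G z <= M z ->
    G y <= (M x * (z%:R - y%:R) + M z * (y%:R - x%:R)) / (z%:R - x%:R).
  move=> aG Gx Gz; rewrite ler_pdivlMr // aG.
  by rewrite lerD // ler_wpM2r // subr_ge0 ler_nat ltnW.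
suff : M y <= (M x * (z%:R - y%:R) + M z * (y%:R - x%:R)) / (z%:R - x%:R).
  by rewrite ler_pdivlMr //; lra.
rewrite {1}/M big_seq; apply: bigmax_le => [|i ir]; apply: le_chord => //;
  by [exact: bigmax_ge_id | exact: le_bigmax_seq].
Qed.

Definition slope g p := g p.+1 - g p.

Definition tangent g p (x : nat) := g p + slope g p * (x%:R - p%:R).

Lemma tangent_affine g p : affine (tangent g p).
Proof. by move=> x y z; rewrite /tangent; ring. Qed.

Section Tangents.
Variables (S : seq nat) (g : nat -> R).
Hypothesis gS : convex_on S g.

Lemma tangent_le p r : p \in S -> p.+1 \in S -> r \in S -> tangent g p r <= g r.
Proof.
rewrite /tangent /slope => pS p1S rS; case: (ltngtP r p) => [rp|pr|->]; last first.
- by rewrite subrr mulr0 addr0.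
- move: pr; rewrite leq_eqVlt => /predU1P[<-|p1r]; first by rewrite -natr1; lra.
  by have := convex_on_cross gS pS p1S rS (ltnSn p) p1r; rewrite -natr1; lra.
- by have := convex_on_cross gS rS pS p1S rp (ltnSn p); rewrite -natr1; nra.
Qed.

Lemma slope_le p q : (p <= q)%N ->
  p \in S -> p.+1 \in S -> q \in S -> q.+1 \in S -> slope g p <= slope g q.
Proof.
move=> pq pS p1S qS q1S.
have := tangent_le pS p1S q1S; have := tangent_le qS q1S pS.
have : (p%:R <= q%:R :> R) by rewrite ler_nat.
rewrite /tangent /slope -!natr1; nra.
Qed.

Lemma tangent_le_right p q x : (p <= q <= x)%N ->
  p \in S -> p.+1 \in S -> q \in S -> q.+1 \in S -> tangent g p x <= tangent g q x.
Proof.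
move=> /andP[pq qx] pS p1S qS q1S.
have := tangent_le pS p1S qS; have := slope_le pq pS p1S qS q1S.
have : (q%:R <= x%:R :> R) by rewrite ler_nat.
rewrite /tangent; nra.
Qed.

Lemma tangent_le_left p q x : (p <= q)%N -> (x <= p.+1)%N ->
  p \in S -> p.+1 \in S -> q \in S -> q.+1 \in S -> tangent g q x <= tangent g p x.
Proof.
move=> pq xp pS p1S qS q1S.
have := tangent_le qS q1S p1S; have := slope_le pq pS p1S qS q1S.
have : (x%:R <= p.+1%:R :> R) by rewrite ler_nat.
rewrite /tangent /slope -!natr1; nra.
Qed.

(* Equal slopes at p and q squeeze g between its tangent at p and its chord. *)
Lemma convex_on_eq_tangent p q x : (p < x <= q)%N -> slope g p = slope g q ->
  p \in S -> p.+1 \in S -> x \in S -> q \in S -> q.+1 \in S -> g x = tangent g p x.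
Proof.
move=> /andP[px xq] epq pS p1S xS qS q1S.
have lowx := tangent_le pS p1S xS.
have upq : g q <= tangent g p q.
  by have := tangent_le qS q1S p1S; rewrite /tangent -epq /slope -!natr1; lra.
apply/eqP; rewrite eq_le lowx andbT.
move: px; rewrite leq_eqVlt => /predU1P[<-|p1x].
  by rewrite /tangent /slope -natr1; lra.
move: xq; rewrite leq_eqVlt => /predU1P[-> //|xq].
have := convex_on_cross gS p1S xS qS p1x xq.
have : (p.+1%:R < x%:R :> R) by rewrite ltr_nat.
have : (x%:R < q%:R :> R) by rewrite ltr_nat.
move: lowx upq; rewrite /tangent /slope -!natr1; nra.
Qed.

End Tangents.
End ConvexOnSeq.

Lemma count_flatten_le (T : Type) (I : nat -> seq T) (p q : pred T) (a : pred nat) c s :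
  (forall k, k \in s -> count p (I k) <= count q (I k) + (~~ a k) * c)%N ->
  (count p (flatten (map I s)) <= count q (flatten (map I s)) + count (predC a) s * c)%N.
Proof.
elim: s => //= k s IH H; rewrite !count_cat.
have := H k (mem_head _ _); have := IH (fun j js => H j (mem_behead (s := k :: s) js)).
by case: (a k) => /=; lia.
Qed.

Lemma sub_in_count (T : eqType) (a1 a2 : pred T) s :
  {in s, subpred a1 a2} -> (count a1 s <= count a2 s)%N.
Proof.
move=> sub; rewrite -(@eq_in_count _ (predI a1 a2)) ?sub_count // => [x /andP[] //|].
by move=> x xs /=; case a1x: (a1 x); rewrite //= sub.
Qed.

Lemma count_map_le (T : eqType) (a : nat -> T) (p : pred T) (s : seq nat) (B : seq T) :
  uniq s -> {in s &, injective a} -> {subset map a s <= B} ->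
  (count (p \o a) s <= count p B)%N.
Proof.
move=> us ainj sB; rewrite -count_map -!size_filter uniq_leq_size //.
  by rewrite filter_uniq // map_inj_in_uniq.
by move=> y; rewrite !mem_filter => /andP[-> /sB].
Qed.

Lemma count_jumps_le (R : realFieldType) (sigma : nat -> R) (P : pred nat) (V : seq R) L :
  (forall i j, (i <= j <= L)%N -> sigma i <= sigma j) ->
  (forall k, (k < L)%N -> P k -> sigma k.+1 \in V) ->
  (count (fun k => P k && (sigma k != sigma k.+1)) (iota 0 L) <= size (undup V))%N.
Proof.
move=> mono inV; rewrite -size_filter.
set K := filter _ _; have Kuniq : uniq K by rewrite filter_uniq // iota_uniq.
have memK k : k \in K -> [/\ (k < L)%N, P k & sigma k < sigma k.+1].
  rewrite mem_filter mem_iota => /andP[/andP[Pk ne] kL]; have kL' : (k < L)%N by lia.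
  by split=> //; rewrite lt_neqAle ne mono // leqnSn kL'.
have incr k k' : k \in K -> k' \in K -> (k < k')%N -> sigma k.+1 < sigma k'.+1.
  move=> /memK[_ _ _] /memK[k'L _ lt'] kk'.
  by apply: le_lt_trans lt'; apply: mono; rewrite kk' ltnW.
rewrite -(size_map (fun k => sigma k.+1)) uniq_leq_size //.
  rewrite map_inj_in_uniq // => k k' kK k'K e.
  by case: (ltngtP k k') => // [/(incr _ _ kK k'K)|/(incr _ _ k'K kK)]; rewrite e ltxx.
by move=> v /mapP[k /memK[kL Pk _] ->]; rewrite mem_undup inV.
Qed.

Section Breakpoints.
Variable m : nat.
Hypothesis m_ge3 : (3 <= m)%N.

Lemma bptE j : bpt m j = if j == 0%N then 1%N else (j * m - 1)%N.
Proof. by rewrite /bpt subn1. Qed.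

Lemma bpt_gt0 j : (0 < bpt m j)%N.
Proof. by rewrite bptE; case: eqP => // ?; nia. Qed.

Lemma ltn_bpt j j' : (j < j')%N -> (bpt m j < bpt m j')%N.
Proof. by rewrite !bptE; case: eqP => ?; case: eqP => ?; nia. Qed.

Lemma leq_bpt j j' : (j <= j')%N -> (bpt m j <= bpt m j')%N.
Proof. by rewrite leq_eqVlt => /predU1P[-> //|/ltn_bpt/ltnW]. Qed.

Lemma bpt_inj : injective (bpt m).
Proof.
by move=> j j' e; case: (ltngtP j j') => // /ltn_bpt; rewrite e ltnn.
Qed.

Lemma bpt_subn_le j : (bpt m j.+1 - bpt m j <= m)%N.
Proof. by rewrite !bptE; case: eqP => ?; case: eqP => ?; nia. Qed.

Lemma bptS_last L : (0 < L)%N -> (bpt m L).+1 = (L * m)%N.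
Proof. by rewrite bptE; case: eqP => ?; nia. Qed.

Lemma flatten_blocks K :
  flatten [seq iota (bpt m k).+1 (bpt m k.+1 - bpt m k) | k <- iota 0 K] =
  iota 2 (bpt m K).-1.
Proof.
elim: K => [|K IH]; first by [].
rewrite -addn1 iotaD map_cat flatten_cat IH /= cats0 add0n addn1.
have := bpt_gt0 K; have := ltn_bpt (ltnSn K) => lt0 lt1.
by rewrite (_ : (bpt m K).+1 = 2 + (bpt m K).-1)%N -?iotaD; [congr iota|]; lia.
Qed.

Lemma mem_bpt_Bset L j : (j <= L)%N -> bpt m j \in Bset m L.
Proof.
move=> jL; rewrite /Bset mem_undup mem_cat; case: (posnP j) => [->//|j0].
apply/orP; right; apply/flatten_mapP; exists j; rewrite ?inE ?eqxx //.
by rewrite mem_iota; lia.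
Qed.

Lemma mem_bptS_Bset L j : (j <= L)%N -> (bpt m j).+1 \in Bset m L.
Proof.
move=> jL; rewrite /Bset mem_undup mem_cat; case: (posnP j) => [->//|j0].
apply/orP; right; apply/flatten_mapP; exists j; rewrite ?inE ?eqxx ?orbT //.
by rewrite mem_iota; lia.
Qed.

End Breakpoints.

Lemma size_Bset m L : (size (Bset m L) <= 2 + 2 * L)%N.
Proof.
rewrite (leq_trans (size_undup _)) // size_cat size_flatten /shape -map_comp.
rewrite (@eq_map _ _ _ (fun=> 2%N)) // sumnE big_map big_const_seq count_predT.
by rewrite size_iota iter_addn_0.
Qed.

(* Since bpt m 0 = 1, the seed of the maximum is the j = 0 tangent. *)
Definition tangent_envelope {R : realFieldType} (h : nat -> R) m L (x : nat) : R :=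
  \big[Num.max/tangent h 1 x]_(j <- iota 0 L.+1) tangent h (bpt m j) x.

Definition good_block {R : realFieldType} (h f : nat -> R) m k : bool :=
  [&& h (bpt m k) == f (bpt m k), h (bpt m k).+1 == f (bpt m k).+1,
      h (bpt m k.+1) == f (bpt m k.+1), h (bpt m k.+1).+1 == f (bpt m k.+1).+1
    & slope h (bpt m k) == slope h (bpt m k.+1)].

Section TangentEnvelope.
Variables (R : realFieldType) (h : nat -> R) (m L : nat).
Hypotheses (m_ge3 : (3 <= m)%N) (hB : convex_on (Bset m L) h).

Lemma convex_tangent_envelope S : convex_on S (tangent_envelope h m L).
Proof. exact: convex_on_bigmax (tangent_affine _ _) (fun j => tangent_affine _ _). Qed.

Lemma tangent_envelope_eq k x : (k < L)%N -> (bpt m k < x <= bpt m k.+1)%N ->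
  slope h (bpt m k) = slope h (bpt m k.+1) ->
  tangent_envelope h m L x = tangent h (bpt m k) x.
Proof.
move=> kL /andP[ltx lex] eslope.
have mB j : (j <= L)%N -> bpt m j \in Bset m L /\ (bpt m j).+1 \in Bset m L.
  by move=> jL; split; [exact: mem_bpt_Bset | exact: mem_bptS_Bset].
have [[b0 b0S] [b1 b1S]] := (mB k (ltnW kL), mB k.+1 kL).
have same_line : tangent h (bpt m k.+1) x = tangent h (bpt m k) x.
  have := convex_on_eq_tangent hB _ eslope b0 b0S b1 b1 b1S.
  rewrite ltn_bpt // leqnn => /(_ isT); rewrite /tangent -eslope => ->; ring.
apply/eqP; rewrite eq_le /tangent_envelope; apply/andP; split; last first.
  by apply: (le_bigmax_seq _ k) => //; rewrite mem_iota; lia.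
have [c0 c0S] := mB 0%N isT.
rewrite big_seq; apply: bigmax_le => [|j].
  by apply: (tangent_le_right hB _ c0 c0S b0 b0S); rewrite leq_bpt // ltnW.
rewrite mem_iota => /andP[_ jL]; have [cj cjS] := mB j jL.
case: (leqP j k) => jk.
  by apply: (tangent_le_right hB _ cj cjS b0 b0S); rewrite leq_bpt // ltnW.
by rewrite -same_line; apply: (tangent_le_left hB _ _ b1 b1S cj cjS); rewrite ?leq_bpt ?leqW.
Qed.

Lemma tangent_envelope_eq_good f k x : (k < L)%N -> (bpt m k < x <= bpt m k.+1)%N ->
  good_block h f m k -> convex_on (Pset m k x) f -> tangent_envelope h m L x = f x.
Proof.
move=> kL bx /and5P[/eqP f0 /eqP f0S /eqP f1 /eqP f1S /eqP eslope] fP.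
have fslope : slope f (bpt m k) = slope f (bpt m k.+1) by rewrite /slope -f0 -f0S -f1 -f1S.
rewrite (tangent_envelope_eq kL bx eslope) (convex_on_eq_tangent fP bx fslope).
  by rewrite /tangent /slope f0 f0S.
all: by rewrite /Pset !inE eqxx ?orbT.
Qed.

End TangentEnvelope.

Section BlockCounts.
Variables (R : realFieldType) (h f : nat -> R) (m L n : nat).
Hypotheses (m_ge3 : (3 <= m)%N) (hB : convex_on (Bset m L) h).
Hypotheses (n_eq : n = (L * m)%N) (L_gt0 : (0 < L)%N).

Lemma count_mismatch_le (a : nat -> nat) : injective a ->
  (forall j, (j < L)%N -> a j \in Bset m L) ->
  (count (fun j => h (a j) != f (a j)) (iota 0 L) <=
   count (fun y => h y != f y) (Bset m L))%N.
Proof.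
move=> ainj aB; apply: (count_map_le (fun y => h y != f y) (iota_uniq _ _) (in2W ainj)).
by move=> y /mapP[j]; rewrite mem_iota => jL ->; apply: aB; lia.
Qed.

Lemma count_jumps_le_num_derivs :
  (count (fun k => ((h (bpt m k.+1) == f (bpt m k.+1)) &&
                    (h (bpt m k.+1).+1 == f (bpt m k.+1).+1)) &&
                   (slope h (bpt m k) != slope h (bpt m k.+1))) (iota 0 L)
   <= num_derivs n f)%N.
Proof.
apply: count_jumps_le => [i j /andP[ij jL]|k kL /andP[/eqP e0 /eqP e1]].
  by apply: (slope_le hB); rewrite ?leq_bpt ?mem_bpt_Bset ?mem_bptS_Bset //; lia.
rewrite /slope e0 e1; apply: (map_f (fun i => f i.+1 - f i)); rewrite mem_iota.
have := bpt_gt0 m_ge3 k.+1; have := leq_bpt m_ge3 kL; have := bptS_last m_ge3 L_gt0.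
by rewrite -n_eq; lia.
Qed.

Lemma count_not_good_le : (count (predC (good_block h f m)) (iota 0 L) <=
  4 * count (fun y => h y != f y) (Bset m L) + num_derivs n f)%N.
Proof.
have cor (a b : pred nat) s : (count (predU a b) s <= count a s + count b s)%N.
  by rewrite -count_predUI leq_addr.
have bpt_inj := bpt_inj m_ge3.
set t := count _ (Bset m L).
rewrite (_ : 4 * t + _ = t + (t + (t + (t + num_derivs n f))))%N; last lia.
apply: leq_trans (sub_count _ _) _; last first.
  apply: leq_trans (cor _ _ _) (leq_add (@count_mismatch_le (bpt m) bpt_inj _) _).
    by move=> j jL; rewrite mem_bpt_Bset // ltnW.
  apply: leq_trans (cor _ _ _) (leq_add (@count_mismatch_le (fun j => (bpt m j).+1) _ _) _).
  - by move=> j j' /succn_inj/bpt_inj.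
  - by move=> j jL; rewrite mem_bptS_Bset // ltnW.
  apply: leq_trans (cor _ _ _) (leq_add (@count_mismatch_le (fun j => bpt m j.+1) _ _) _).
  - by move=> j j' /bpt_inj/succn_inj.
  - by move=> j jL; rewrite mem_bpt_Bset.
  apply: leq_trans (cor _ _ _) (leq_add (@count_mismatch_le (fun j => (bpt m j.+1).+1) _ _) _).
  - by move=> j j' /succn_inj/bpt_inj/succn_inj.
  - by move=> j jL; rewrite mem_bptS_Bset.
  exact: count_jumps_le_num_derivs.
by move=> k /=; rewrite /good_block; do 5!case: (_ == _).
Qed.

Lemma count_disagree_le :
  (count (fun x => tangent_envelope h m L x != f x) (dom n) <=
   2 + count (bad_point m L f) (iota 2 (n - 2)) +
   count (predC (good_block h f m)) (iota 0 L) * m)%N.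
Proof.
have n_ge2 : (2 <= n)%N by rewrite n_eq; nia.
have dom_split : dom n = 1%N :: iota 2 (n - 2) ++ [:: n].
  rewrite /dom {1}(_ : n = 1 + (n - 2 + 1))%N; last lia.
  by rewrite !iotaD /= subnKC.
have blocks : iota 2 (n - 2) =
    flatten [seq iota (bpt m k).+1 (bpt m k.+1 - bpt m k) | k <- iota 0 L].
  rewrite flatten_blocks //; have := bptS_last m_ge3 L_gt0.
  by rewrite -n_eq => <-; rewrite subn2.
rewrite dom_split /= count_cat /= blocks.
set g := tangent_envelope h m L; set I := flatten _.
apply: (@leq_trans (2 + count (fun x => g x != f x) I)%N).
  by case: (g 1%N != f 1%N); case: (g n != f n) => /=; lia.
rewrite -addnA leq_add2l; apply: count_flatten_le => k; rewrite mem_iota => /andP[_ kL].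
have bk := ltn_bpt m_ge3 (ltnSn k).
case good: (good_block h f m k) => /=; last first.
  rewrite mul1n (leq_trans (count_size _ _)) // size_iota.
  exact: leq_trans (bpt_subn_le m_ge3 k) (leq_addl _ _).
rewrite mul0n addn0; apply: sub_in_count => x; rewrite mem_iota => xk.
have bx : (bpt m k < x <= bpt m k.+1)%N by lia.
apply: contraR => /hasPn/(_ k); rewrite mem_iota bx /= negbK => /(_ kL) fP.
by apply/eqP/(tangent_envelope_eq_good m_ge3 hB kL bx good fP).
Qed.

End BlockCounts.

Lemma scale_relations (R : realFieldType) (n s m : nat) (eps : R) :
  m%:R = eps * n%:R / (2 * s%:R) -> (0 < m)%N -> (m %| n)%N ->
  [/\ (0 < s)%N, (0 < n %/ m)%N & eps * (n %/ m)%:R = 2 * s%:R].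
Proof.
move=> hm m_gt0 mn.
have s_gt0 : (0 < s)%N.
  case: (posnP s) hm => // ->; rewrite mulr0 invr0 mulr0 => /eqP.
  by rewrite pnatr_eq0; lia.
have s2_neq0 : 2 * s%:R != 0 :> R by rewrite mulf_neq0 ?pnatr_eq0 //; lia.
have epsn : eps * n%:R = 2 * s%:R * m%:R by rewrite hm mulrCA divff ?mulr1.
have epsL : eps * (n %/ m)%:R = 2 * s%:R.
  have m_neq0 : m%:R != 0 :> R by rewrite pnatr_eq0; lia.
  by apply: (mulIf m_neq0); rewrite -mulrA -[X in eps * X]natrM divnK.
split=> //; rewrite lt0n; apply/eqP => L0.
by move: s2_neq0; rewrite -epsL L0 mulr0 eqxx.
Qed.

(* As t is an integer, either t = 0 or 32 <= 2 eps + 4 s forces s >= 15/2. *)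
Lemma bad_count_arith (R : realFieldType) (eps : R) (s m t L C : nat) :
  0 < eps < 1 -> (3 <= m)%N -> (0 < s)%N -> eps * L%:R = 2 * s%:R ->
  t%:R <= eps / 32 * (2 + 2 * L)%:R ->
  2 * s%:R * m%:R <= (2 + C + (4 * t + s) * m)%:R :> R ->
  2 * s%:R * m%:R / 32 <= C%:R :> R.
Proof.
move=> /andP[eps0 eps1] m3 s1 epsL.
have {}m3 : 3 <= m%:R :> R by rewrite (ler_nat R 3).
have {}s1 : 1 <= s%:R :> R by rewrite (ler_nat R 1).
case: (posnP t) => [-> | t_gt0]; rewrite !(natrD, natrM) => tB hD.
  have : 3 <= s%:R * m%:R :> R by nra.
  lra.
have t1 : 1 <= t%:R :> R by rewrite (ler_nat R 1).
have s_ge : 15 / 2 <= s%:R :> R by lra.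
have tm : 4 * t%:R * m%:R <= (2 + 4 * s%:R) / 8 * m%:R :> R.
  by apply: ler_wpM2r; lra.
have sm : 15 / 2 * m%:R <= s%:R * m%:R :> R by apply: ler_wpM2r; lra.
lra.
Qed.

Unset Implicit Arguments. Set Strict Implicit.

Theorem mainTheorem6 (R : realType) (n s m : nat) (eps : R) (f : nat -> R)
  (heps : 0 < eps < 1)
  (hm : m%:R = eps * n%:R / (2 * s%:R))
  (hm3 : (3 <= m)%N)
  (hL : (m %| n)%N)
  (hs : (num_derivs n f <= s)%N)
  (hfar : eps_far eps n f)
  (hB : exists h : nat -> R, convex_on (Bset m (n %/ m)) h /\
          (count (fun y => h y != f y) (Bset m (n %/ m)))%:R
            <= eps / 32 * (size (Bset m (n %/ m)))%:R) :
  eps * n%:R / 32 <= (count (bad_point m (n %/ m) f) (iota 2 (n - 2)))%:R.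
Proof.
case: hB => h [hB hmis]; set L := (n %/ m)%N in hB hmis *.
have n_eq : n = (L * m)%N by rewrite divnK.
have m_gt0 : (0 < m)%N by lia.
have [s_gt0 L_gt0 epsL] := scale_relations hm m_gt0 hL.
have disagree := count_disagree_le f hm3 hB n_eq L_gt0.
have not_good := count_not_good_le f hm3 hB n_eq L_gt0.
have far := hfar _ (convex_tangent_envelope h m L (dom n)).
have epsn : eps * n%:R = 2 * s%:R * m%:R by rewrite n_eq natrM mulrA epsL.
rewrite epsn; apply: (bad_count_arith heps hm3 s_gt0 epsL).
  apply: le_trans hmis _; apply: ler_wpM2l; first by case/andP: heps => ? _; lra.
  by rewrite ler_nat size_Bset.
rewrite -epsn; apply: le_trans far _; rewrite ler_nat.
apply: leq_trans disagree _; rewrite leq_add2l leq_mul2r.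
by apply/orP; right; apply: leq_trans not_good _; rewrite leq_add2l.
Qed.
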